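(* Let $G$ be a finite $p$-group, $k=\mathbb F_p$, and let $L,N$ be normal subgroups of $G$. Then (1) $\mathcal I(L)\mathcal I(N)kG+\mathcal I(N)\mathcal I(L)kG=\mathcal I([L,N])kG+\mathcal I(N)\mathcal I(L)kG$; (2) for every $n\ge1$, $\mathcal J^n(N,G)=\sum_{i=1}^{n}\mathcal I(N)^{n+1-i}\,\mathcal I(\gamma_i^G(N))kG$.
   Context: $\mathcal I(X)$ is the augmentation ideal of $kX$, viewed inside $kG$. The ideals $\mathcal J^n(N,G)$ are defined by $\mathcal J^1(N,G)=\mathcal I(N)\mathcal I(G)$ and $\mathcal J^{n+1}(N,G)=\mathcal I(N)\mathcal J^n(N,G)+\mathcal J^n(N,G)\mathcal I(N)$. The relative lower central series is $\gamma_1^G(N)=G$, $\gamma_{n+1}^G(N)=[\gamma_n^G(N),N]$. *)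

From mathcomp Require Import all_boot all_order all_algebra all_fingroup all_solvable pgroup commutator.
Set Implicit Arguments. Unset Strict Implicit. Unset Printing Implicit Defensive.
Import GRing.Theory.
Local Open Scope ring_scope.
Local Open Scope group_scope.

(* Group algebra over a coefficient ring k: elements of kgT are finitely
   supported functions gT -> k; kG is the subspace of functions supported
   in G. *)
Section GroupAlgebra.
Variables (gT : finGroupType) (k : nzRingType).

Definition galg := {ffun gT -> k}.

Definition gmul (f g : galg) : galg :=
  [ffun z => (\sum_(x : gT) f x * g (x^-1 * z)%g)%R].

Definition subsp := galg -> Prop.

Definition kspan (X : {set gT}) : subsp :=
  fun f => forall x, x \notin X -> f x = 0%R.

Definition aug (X : {set gT}) : subsp :=
  fun f => kspan X f /\ (\sum_(x : gT) f x = 0)%R.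

Definition prodsp (U V : subsp) : subsp :=
  fun f => exists s : seq (galg * galg),
      (forall uv, uv \in s -> U uv.1 /\ V uv.2) /\
      f = (\sum_(uv <- s) gmul uv.1 uv.2)%R.

Definition addsp (U V : subsp) : subsp :=
  fun f => exists u v, U u /\ V v /\ f = (u + v)%R.

Definition zerosp : subsp := fun f => f = 0%R.

(* U^(m+1) := U * U * ... * U  (m+1 factors) *)
Fixpoint powsp1 (U : subsp) (m : nat) : subsp :=
  match m with 0 => U | m'.+1 => prodsp U (powsp1 U m') end.

(* U^m for m >= 1 (only used with m >= 1) *)
Definition powsp (U : subsp) (m : nat) : subsp := powsp1 U m.-1.

Definition eqsp (U V : subsp) : Prop := forall f, U f <-> V f.

(* J^n(N,G), n >= 1; Jrel m = J^(m+1) *)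
Fixpoint Jrel (N G : {set gT}) (m : nat) : subsp :=
  match m with
  | 0 => prodsp (aug N) (aug G)
  | m'.+1 => addsp (prodsp (aug N) (Jrel N G m')) (prodsp (Jrel N G m') (aug N))
  end.
Definition J (N G : {set gT}) (n : nat) : subsp := Jrel N G n.-1.

End GroupAlgebra.

(* relative lower central series: gammaR G N m = gamma_{m+1}^G(N) *)
Fixpoint gammaR (gT : finGroupType) (G N : {set gT}) (m : nat) : {set gT} :=
  match m with 0 => G | m'.+1 => [~: gammaR G N m', N] end.
Definition gamma (gT : finGroupType) (G N : {set gT}) (i : nat) : {set gT} :=
  gammaR G N i.-1.

Arguments kspan {gT} k X _.
Arguments aug {gT} k X _.
Arguments J {gT} k N G n _.
Arguments zerosp {gT k} _.

From mathcomp Require Import all_boot all_order all_algebra all_fingroup all_solvable pgroup commutator.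

(* The right ideal I(X)kG is spanned by the elements (x - 1)h, x in X, h in G,
   so every inclusion reduces to a statement about such generators.  Two
   identities in kG do all the work:
     (x - 1)(y - 1) = (y - 1)(x - 1) + ([x^-1, y^-1] - 1)yx,
     ab - 1 = (a - 1)b + (b - 1).
   The first shows I(L)I(N)kG <= I(N)I(L)kG + I([L,N])kG; read backwards (and
   combined with the second for products of commutators) it shows
   I([L,N])kG <= I(L)I(N)kG + I(N)I(L)kG.  For (2) one
   inducts on n: for N normal kG I(N) = I(N) kG, and the two inclusions above
   with L := gamma_i move one factor I(N) past I(gamma_i)kG at the price of a
   term I(gamma_(i+1))kG. *)

Set Implicit Arguments. Unset Strict Implicit. Unset Printing Implicit Defensive.
Import GRing.Theory.
Local Open Scope ring_scope.

Section Convolution.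
Variables (gT : finGroupType) (k : nzRingType).
Local Notation galg := (galg gT k).
Local Notation gmul := (@gmul gT k).

Lemma gmulDl f1 f2 g : gmul (f1 + f2) g = gmul f1 g + gmul f2 g.
Proof.
by apply/ffunP => z; rewrite !ffunE -big_split; apply: eq_bigr => x _; rewrite ffunE mulrDl.
Qed.

Lemma gmulDr f g1 g2 : gmul f (g1 + g2) = gmul f g1 + gmul f g2.
Proof.
by apply/ffunP => z; rewrite !ffunE -big_split; apply: eq_bigr => x _; rewrite ffunE mulrDr.
Qed.

Lemma gmul0l g : gmul 0 g = 0.
Proof. by apply/ffunP => z; rewrite !ffunE big1 // => x _; rewrite ffunE mul0r. Qed.

Lemma gmul0r g : gmul g 0 = 0.
Proof. by apply/ffunP => z; rewrite !ffunE big1 // => x _; rewrite ffunE mulr0. Qed.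

Lemma gmulNr f g : gmul f (- g) = - gmul f g.
Proof. by apply/eqP; rewrite -subr_eq0 opprK -gmulDr addNr gmul0r. Qed.

Lemma gmulNl f g : gmul (- f) g = - gmul f g.
Proof. by apply/eqP; rewrite -subr_eq0 opprK -gmulDl addNr gmul0l. Qed.

Lemma gmulBl f1 f2 g : gmul (f1 - f2) g = gmul f1 g - gmul f2 g.
Proof. by rewrite gmulDl gmulNl. Qed.

Lemma gmulBr f g1 g2 : gmul f (g1 - g2) = gmul f g1 - gmul f g2.
Proof. by rewrite gmulDr gmulNr. Qed.

Lemma gmulA f g h : gmul (gmul f g) h = gmul f (gmul g h).
Proof.
apply/ffunP => z; rewrite !ffunE.
under eq_bigr do rewrite ffunE mulr_suml.
rewrite exchange_big /=; apply: eq_bigr => x _.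
rewrite ffunE mulr_sumr (reindex_inj (mulgI x)) /=.
by apply: eq_bigr => w _; rewrite mulKg mulrA invMg mulgA.
Qed.

Lemma sum_gmul f g : \sum_z gmul f g z = (\sum_z f z) * (\sum_z g z).
Proof.
under eq_bigr do rewrite ffunE.
rewrite exchange_big mulr_suml /=; apply: eq_bigr => x _.
rewrite -mulr_sumr; congr (_ * _).
by rewrite (reindex_inj (mulgI x)) /=; apply: eq_bigr => w _; rewrite mulKg.
Qed.

Definition gdelta (a : gT) : galg := [ffun z => (z == a)%:R].
Definition gscalar (c : k) : galg := [ffun z => if z == 1%g then c else 0].
Definition aug_gen (x : gT) : galg := gdelta x - gdelta 1%g.

Lemma sum_gdelta a : \sum_z gdelta a z = 1.
Proof.
rewrite (bigD1 a) //= ffunE eqxx big1 ?addr0 // => z /negbTE za.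
by rewrite ffunE za.
Qed.

Lemma gmul_deltal a f : gmul (gdelta a) f = [ffun z => f (a^-1 * z)%g].
Proof.
apply/ffunP => z; rewrite !ffunE (bigD1 a) //= big1 ?addr0 => [|x /negbTE xa].
  by rewrite ffunE eqxx mul1r.
by rewrite ffunE xa mul0r.
Qed.

Lemma gmul_deltar a f : gmul f (gdelta a) = [ffun z => f (z * a^-1)%g].
Proof.
apply/ffunP => z; rewrite !ffunE (bigD1 (z * a^-1)%g) //= big1 ?addr0 => [|x xa].
  by rewrite ffunE invMg invgK mulgKV eqxx mulr1.
rewrite ffunE; case: eqP => [e|]; last by rewrite mulr0.
by move: xa; rewrite -e invMg invgK mulKVg eqxx.
Qed.

Lemma gmul1l f : gmul (gdelta 1%g) f = f.
Proof. by apply/ffunP => z; rewrite gmul_deltal ffunE invg1 mul1g. Qed.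

Lemma gmul1r f : gmul f (gdelta 1%g) = f.
Proof. by apply/ffunP => z; rewrite gmul_deltar ffunE invg1 mulg1. Qed.

Lemma gmul_deltaA a b f : gmul (gdelta a) (gmul (gdelta b) f) = gmul (gdelta (a * b)%g) f.
Proof.
suff ab : gmul (gdelta a) (gdelta b) = gdelta (a * b)%g by rewrite -gmulA ab.
by apply/ffunP => z; rewrite gmul_deltal !ffunE -(inj_eq (mulgI a)) mulKVg.
Qed.

Lemma gscalar0 : gscalar 0 = 0.
Proof. by apply/ffunP => z; rewrite !ffunE if_same. Qed.

Lemma sum_gscalar (F : gT -> k) : \sum_x gscalar (F x) = gscalar (\sum_x F x).
Proof.
apply/ffunP => z; rewrite sum_ffunE ffunE; case: (eqVneq z 1%g) => [->|z1].
  by apply: eq_bigr => x _; rewrite ffunE eqxx.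
by rewrite big1 // => x _; rewrite ffunE (negbTE z1).
Qed.

Lemma gdelta_decomp (f : galg) : f = \sum_x gmul (gdelta x) (gscalar (f x)).
Proof.
apply/ffunP => z; rewrite sum_ffunE.
under eq_bigr do rewrite gmul_deltal !ffunE -eq_mulVg1.
rewrite (bigD1 z) //= eqxx big1 ?addr0 // => x /negbTE.
by rewrite eq_sym => ->.
Qed.

Lemma aug_gen_commute x y h :
  gmul (aug_gen x) (gmul (aug_gen y) h) =
  gmul (aug_gen y) (gmul (aug_gen x) h)
    + gmul (aug_gen [~ x^-1, y^-1]) (gmul (gdelta (y * x)) h).
Proof.
rewrite /aug_gen !gmulBl !gmulBr !gmul1l !gmul_deltaA.
have -> : ([~ x^-1, y^-1] * (y * x) = x * y)%g.
  by rewrite /commg /conjg !invgK !mulgA !mulgKV.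
rewrite [RHS]addrC [RHS]addrA subrKA !opprB addrACA [RHS]addrACA.
by congr (_ + _); apply: addrC.
Qed.

Lemma gdelta_aug_genJ g x h :
  gmul (gdelta g) (gmul (aug_gen x) h) = gmul (aug_gen (x ^ g^-1)%g) (gmul (gdelta g) h).
Proof.
rewrite /aug_gen !gmulBl !gmulBr !gmul1l !gmul_deltaA.
by rewrite /conjg invgK mulgA mulgKV.
Qed.

Lemma aug_genM a b h :
  gmul (aug_gen (a * b)) h = gmul (aug_gen a) (gmul (gdelta b) h) + gmul (aug_gen b) h.
Proof. by rewrite /aug_gen !gmulBl !gmul1l gmul_deltaA addrA subrK. Qed.

End Convolution.

Section Subspaces.
Variables (gT : finGroupType) (k : nzRingType).
Local Notation galg := (galg gT k).
Local Notation gmul := (@gmul gT k).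
Local Notation subsp := (subsp gT k).

Definition lesp (U V : subsp) := forall f, U f -> V f.
Definition sp_closed (S : subsp) := S 0 /\ forall a b, S a -> S b -> S (a + b).
Definition bigsp (r : seq nat) (F : nat -> subsp) := \big[@addsp gT k/@zerosp gT k]_(i <- r) F i.

Lemma lesp_refl (U : subsp) : lesp U U.
Proof. by []. Qed.

Lemma lesp_trans (U V W : subsp) : lesp U V -> lesp V W -> lesp U W.
Proof. by move=> UV VW f /UV /VW. Qed.

Lemma eqsp_le (U V : subsp) : lesp U V -> lesp V U -> eqsp U V.
Proof. by move=> UV VU f; split; [apply: UV|apply: VU]. Qed.

Lemma preim_gmull_closed a (W : subsp) : sp_closed W -> sp_closed (fun t => W (gmul a t)).
Proof.
move=> [W0 WD]; split=> [|u v Wu Wv]; first by rewrite gmul0r.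
by rewrite gmulDr; apply: WD.
Qed.

Lemma preim_gmulr_closed a (W : subsp) : sp_closed W -> sp_closed (fun t => W (gmul t a)).
Proof.
move=> [W0 WD]; split=> [|u v Wu Wv]; first by rewrite gmul0l.
by rewrite gmulDl; apply: WD.
Qed.

Lemma zerosp_closed : sp_closed (@zerosp gT k).
Proof. by split=> // a b -> ->; rewrite addr0. Qed.

Lemma prodsp_closed U V : sp_closed (prodsp U V).
Proof.
split; first by exists [::]; rewrite big_nil.
move=> a b [s [Hs ->]] [t [Ht ->]]; exists (s ++ t); rewrite big_cat; split=> //.
by move=> uv; rewrite mem_cat => /orP[/Hs|/Ht].
Qed.

Lemma prodsp_mem (U V : subsp) u v : U u -> V v -> prodsp U V (gmul u v).
Proof.
move=> Uu Vv; exists [:: (u, v)]; rewrite big_seq1; split=> // uv.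
by rewrite inE => /eqP ->.
Qed.

Lemma prodsp_le (U V W : subsp) : sp_closed W ->
  (forall u v, U u -> V v -> W (gmul u v)) -> lesp (prodsp U V) W.
Proof.
move=> [W0 WD] UVW f [s [Hs ->]]; elim: s Hs => [|uv s IH] Hs; first by rewrite big_nil.
rewrite big_cons; apply: WD; last by apply: IH => x xs; apply: Hs; rewrite inE xs orbT.
by have [] := Hs uv (mem_head _ _); apply: UVW.
Qed.

Lemma prodspS (U V U' V' : subsp) : lesp U U' -> lesp V V' -> lesp (prodsp U V) (prodsp U' V').
Proof.
move=> UU' VV'; apply: prodsp_le => [|u v /UU' U'u /VV' V'v]; first exact: prodsp_closed.
exact: prodsp_mem.
Qed.

Lemma prodspAl (U V W : subsp) : lesp (prodsp (prodsp U V) W) (prodsp U (prodsp V W)).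
Proof.
apply: prodsp_le => [|a w UVa Ww]; first exact: prodsp_closed.
apply: (prodsp_le (W := fun a => prodsp U (prodsp V W) (gmul a w))) UVa.
  exact/preim_gmulr_closed/prodsp_closed.
by move=> u v Uu Vv; rewrite gmulA; apply: prodsp_mem => //; apply: prodsp_mem.
Qed.

Lemma prodspAr (U V W : subsp) : lesp (prodsp U (prodsp V W)) (prodsp (prodsp U V) W).
Proof.
apply: prodsp_le => [|u a Uu VWa]; first exact: prodsp_closed.
apply: (prodsp_le (W := fun a => prodsp (prodsp U V) W (gmul u a))) VWa.
  exact/preim_gmull_closed/prodsp_closed.
by move=> v w Vv Ww; rewrite -gmulA; apply: prodsp_mem => //; apply: prodsp_mem.
Qed.

Lemma addsp_closed A B : sp_closed A -> sp_closed B -> sp_closed (addsp A B).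
Proof.
move=> [A0 AD] [B0 BD]; split; first by exists 0, 0; rewrite addr0.
move=> _ _ [a [b [Aa [Bb ->]]]] [a' [b' [Aa' [Bb' ->]]]].
by exists (a + a'), (b + b'); rewrite addrACA; split; [exact: AD|split; [exact: BD|]].
Qed.

Lemma addsp_le (A B W : subsp) : sp_closed W -> lesp A W -> lesp B W -> lesp (addsp A B) W.
Proof. by move=> [_ WD] AW BW _ [a [b [Aa [Bb ->]]]]; apply: WD; [apply: AW|apply: BW]. Qed.

Lemma addspSl (A B : subsp) : B 0 -> lesp A (addsp A B).
Proof. by move=> B0 f Af; exists f, 0; rewrite addr0. Qed.

Lemma addspSr (A B : subsp) : A 0 -> lesp B (addsp A B).
Proof. by move=> A0 f Bf; exists 0, f; rewrite add0r. Qed.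

Lemma addspS (A B A' B' : subsp) : lesp A A' -> lesp B B' -> lesp (addsp A B) (addsp A' B').
Proof. by move=> AA' BB' _ [a [b [/AA' Aa [/BB' Bb ->]]]]; exists a, b. Qed.

Lemma prodspDr (U A B : subsp) :
  lesp (prodsp U (addsp A B)) (addsp (prodsp U A) (prodsp U B)).
Proof.
apply: prodsp_le => [|u _ Uu [a [b [Aa [Bb ->]]]]].
  by apply: addsp_closed; apply: prodsp_closed.
by rewrite gmulDr; exists (gmul u a), (gmul u b); split; [|split]; try apply: prodsp_mem.
Qed.

Lemma bigsp_closed r F : (forall i, sp_closed (F i)) -> sp_closed (bigsp r F).
Proof.
move=> FC; rewrite /bigsp; elim: r => [|i r IH]; first by rewrite big_nil; exact: zerosp_closed.
by rewrite big_cons; apply: addsp_closed.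
Qed.

Lemma bigsp_le r F W : sp_closed W -> (forall i, i \in r -> lesp (F i) W) -> lesp (bigsp r F) W.
Proof.
move=> WC; rewrite /bigsp; elim: r => [|i r IH] FW; first by rewrite big_nil => f ->; case: WC.
rewrite big_cons; apply: addsp_le => //; first by apply: FW; rewrite mem_head.
by apply: IH => j jr; apply: FW; rewrite inE jr orbT.
Qed.

Lemma bigsp_sup r F j : (forall i, sp_closed (F i)) -> j \in r -> lesp (F j) (bigsp r F).
Proof.
move=> FC; elim: r => [|i r IH] //; rewrite inE /bigsp big_cons.
have [rF0 _] := bigsp_closed r FC; have [Fi0 _] := FC i.
case/orP=> [/eqP ->|jr]; first exact: addspSl.
exact: lesp_trans (IH jr) (addspSr Fi0).
Qed.

Lemma prodsp_sumr (U : subsp) r F :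
  lesp (prodsp U (bigsp r F)) (bigsp r (fun i => prodsp U (F i))).
Proof.
apply: prodsp_le => [|u f Uu]; first by apply: bigsp_closed => i; apply: prodsp_closed.
rewrite /bigsp; elim: r f => [|i r IH] f; rewrite ?big_nil ?big_cons.
  by move=> ->; rewrite gmul0r.
move=> [a [b [Fa [Rb ->]]]]; rewrite gmulDr; exists (gmul u a), (gmul u b).
by split; [apply: prodsp_mem|split; [apply: IH|]].
Qed.

Lemma prodsp_suml (U : subsp) r F :
  lesp (prodsp (bigsp r F) U) (bigsp r (fun i => prodsp (F i) U)).
Proof.
apply: prodsp_le => [|f u + Uu]; first by apply: bigsp_closed => i; apply: prodsp_closed.
rewrite /bigsp; elim: r f => [|i r IH] f; rewrite ?big_nil ?big_cons.
  by move=> ->; rewrite gmul0l.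
move=> [a [b [Fa [Rb ->]]]]; rewrite gmulDl; exists (gmul a u), (gmul b u).
by split; [apply: prodsp_mem|split; [apply: IH|]].
Qed.

End Subspaces.

Arguments lesp_refl {gT k U}.
Arguments prodspAl {gT k U V W}.
Arguments prodspAr {gT k U V W}.
Arguments prodspDr {gT k U A B}.
Arguments prodsp_sumr {gT k U r F}.
Arguments prodsp_suml {gT k U r F}.

Section Spans.
Variables (gT : finGroupType) (k : nzRingType).
Local Notation galg := (galg gT k).
Local Notation gmul := (@gmul gT k).
Local Notation subsp := (subsp gT k).
Local Notation gdelta := (@gdelta gT k).
Local Notation gscalar := (@gscalar gT k).
Local Notation aug_gen := (@aug_gen gT k).

Lemma kspan_closed (X : {set gT}) : sp_closed (kspan k X).
Proof. by split=> [x _|a b ha hb x xX]; rewrite ffunE ?ha ?hb ?addr0. Qed.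

Lemma kspanN (X : {set gT}) f : kspan k X f -> kspan k X (- f).
Proof. by move=> Xf x xX; rewrite ffunE Xf ?oppr0. Qed.

Lemma kspan_delta (X : {set gT}) g : g \in X -> kspan k X (gdelta g).
Proof. by move=> gX x xX; rewrite ffunE; case: eqP => // e; rewrite e gX in xX. Qed.

Lemma kspan_scalar (X : {group gT}) c : kspan k X (gscalar c).
Proof. by move=> x xX; rewrite ffunE; case: eqP => // e; rewrite e group1 in xX. Qed.

Lemma kspanM (X : {group gT}) f g : kspan k X f -> kspan k X g -> kspan k X (gmul f g).
Proof.
move=> Xf Xg z zX; rewrite ffunE big1 // => x _.
case xX: (x \in X); last by rewrite Xf ?xX ?mul0r.
by rewrite Xg ?mulr0 //; apply: contra zX => zxX; rewrite -(mulKVg x z) groupM.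
Qed.

Lemma aug_closed (X : {set gT}) : sp_closed (aug k X).
Proof.
have [X0 XD] := kspan_closed X.
split=> [|a b [Xa sa] [Xb sb]]; first by split=> //; rewrite big1 // => x _; rewrite ffunE.
by split; [apply: XD|under eq_bigr do rewrite ffunE; rewrite big_split /= sa sb addr0].
Qed.

Lemma augMl (X : {group gT}) h u : kspan k X h -> aug k X u -> aug k X (gmul h u).
Proof. by move=> Xh [Xu su]; split; [apply: kspanM|rewrite sum_gmul su mulr0]. Qed.

Lemma augMr (X : {group gT}) h u : kspan k X h -> aug k X u -> aug k X (gmul u h).
Proof. by move=> Xh [Xu su]; split; [apply: kspanM|rewrite sum_gmul su mul0r]. Qed.

Lemma aug_gen_aug (X : {group gT}) x : x \in X -> aug k X (aug_gen x).
Proof.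
move=> xX; split.
  by apply: (kspan_closed X).2; [apply: kspan_delta|apply/kspanN/kspan_delta/group1].
under eq_bigr do rewrite ffunE [X in _ + X]ffunE.
by rewrite big_split /= sumrN !sum_gdelta subrr.
Qed.

Lemma aug_decomp (X : {set gT}) u : aug k X u -> u = \sum_x gmul (aug_gen x) (gscalar (u x)).
Proof.
move=> [_ su]; under eq_bigr do rewrite gmulBl gmul1l.
by rewrite sumrB -gdelta_decomp sum_gscalar su gscalar0 subr0.
Qed.

Lemma kspan_ind (X : {set gT}) (W : subsp) f : sp_closed W -> kspan k X f ->
  (forall x c, x \in X -> W (gmul (gdelta x) (gscalar c))) -> W f.
Proof.
move=> [W0 WD] Xf WX; rewrite (gdelta_decomp f); apply: big_ind => // x _.
case xX: (x \in X); first exact: WX.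
by rewrite Xf ?xX // gscalar0 gmul0r.
Qed.

Lemma aug_ind (X : {set gT}) (W : subsp) u : sp_closed W -> aug k X u ->
  (forall x c, x \in X -> W (gmul (aug_gen x) (gscalar c))) -> W u.
Proof.
move=> [W0 WD] Xu WX; rewrite (aug_decomp Xu); apply: big_ind => // x _.
case xX: (x \in X); first exact: WX.
by case: Xu => Xu _; rewrite Xu ?xX // gscalar0 gmul0r.
Qed.

Lemma kspan_gmul_ind (X : {set gT}) (W : subsp) f t : sp_closed W -> kspan k X f ->
  (forall x c, x \in X -> W (gmul (gdelta x) (gmul (gscalar c) t))) -> W (gmul f t).
Proof.
move=> WC Xf WX; apply: (kspan_ind (W := fun v => W (gmul v t)) _ Xf).
  exact: preim_gmulr_closed.
by move=> x c xX; rewrite gmulA; apply: WX.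
Qed.

Lemma aug_gmul_ind (X : {set gT}) (W : subsp) u t : sp_closed W -> aug k X u ->
  (forall x c, x \in X -> W (gmul (aug_gen x) (gmul (gscalar c) t))) -> W (gmul u t).
Proof.
move=> WC Xu WX; apply: (aug_ind (W := fun v => W (gmul v t)) _ Xu).
  exact: preim_gmulr_closed.
by move=> x c xX; rewrite gmulA; apply: WX.
Qed.

End Spans.

Section AugmentationIdeals.
Variables (gT : finGroupType) (k : nzRingType) (G : {group gT}).
Local Open Scope group_scope.
Local Notation gmul := (@gmul gT k).
Local Notation subsp := (subsp gT k).
Local Notation gdelta := (@gdelta gT k).
Local Notation gscalar := (@gscalar gT k).
Local Notation aug_gen := (@aug_gen gT k).
Local Notation kG := (kspan k G).
Local Notation IkG X := (prodsp (aug k X) kG).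

Lemma augkG_id : eqsp (IkG G) (aug k G).
Proof.
apply: eqsp_le; first by apply: prodsp_le => [|u h Gu Gh]; [apply: aug_closed|apply: augMr].
by move=> u Gu; rewrite -[u]gmul1r; apply: prodsp_mem => //; apply/kspan_delta/group1.
Qed.

Lemma augkG_scalarMl (Y : {group gT}) c t : IkG Y t -> IkG Y (gmul (gscalar c) t).
Proof.
move: t; apply: prodsp_le => [|v h Yv Gh]; first exact/preim_gmull_closed/prodsp_closed.
by rewrite -gmulA; apply: prodsp_mem => //; apply: augMl _ Yv; apply: kspan_scalar.
Qed.

Lemma augkG_le (X : {set gT}) (W : subsp) : sp_closed W ->
  (forall x h, x \in X -> kG h -> W (gmul (aug_gen x) h)) -> lesp (IkG X) W.
Proof.
move=> WC WX; apply: prodsp_le => // u h Xu Gh; apply: aug_gmul_ind Xu _ => // x c xX.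
by apply: WX => //; apply: kspanM _ Gh; apply: kspan_scalar.
Qed.

Lemma aug_augkG_le (X : {set gT}) (Y : {group gT}) (W : subsp) : sp_closed W ->
  (forall x y h, x \in X -> y \in Y -> kG h ->
     W (gmul (aug_gen x) (gmul (aug_gen y) h))) ->
  lesp (prodsp (aug k X) (IkG Y)) W.
Proof.
move=> WC WXY; apply: prodsp_le => // u t Xu YGt; apply: aug_gmul_ind Xu _ => // x c xX.
apply: (augkG_le (W := fun t => W (gmul (aug_gen x) t))) (augkG_scalarMl c YGt).
  exact: preim_gmull_closed.
by move=> y h yY Gh; apply: WXY.
Qed.

Section TwoSubgroups.
Variables L M : {group gT}.
Hypotheses (sLG : L \subset G) (sMG : M \subset G).

Lemma aug_gen_swap_mem x y h : x \in L -> y \in M -> kG h ->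
  addsp (prodsp (aug k M) (IkG L)) (IkG [~: L, M])
        (gmul (aug_gen x) (gmul (aug_gen y) h)).
Proof.
move=> xL yM Gh; rewrite aug_gen_commute.
exists (gmul (aug_gen y) (gmul (aug_gen x) h)),
  (gmul (aug_gen [~ x^-1, y^-1]) (gmul (gdelta (y * x)) h)).
split; first by apply: prodsp_mem; [apply: aug_gen_aug|apply: prodsp_mem => //; apply: aug_gen_aug].
split=> //; apply: prodsp_mem; first by apply: aug_gen_aug; rewrite mem_commg ?groupV.
by apply: kspanM _ Gh; apply/kspan_delta/groupM; [apply: (subsetP sMG)|apply: (subsetP sLG)].
Qed.

Lemma aug_augkG_swap :
  lesp (prodsp (aug k L) (IkG M)) (addsp (prodsp (aug k M) (IkG L)) (IkG [~: L, M])).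
Proof.
apply: aug_augkG_le; first by apply: addsp_closed; apply: prodsp_closed.
by move=> x y h xL yM Gh; apply: aug_gen_swap_mem.
Qed.

Local Notation augLM_sum := (addsp (prodsp (aug k L) (IkG M)) (prodsp (aug k M) (IkG L))).

Lemma aug_gen_commg_mem x y h : x \in L -> y \in M -> kG h ->
  augLM_sum (gmul (aug_gen [~ x, y]) h).
Proof.
move=> xL yM Gh; pose h' := gmul (gdelta (x * y)) h.
have Gh' : kG h'.
  by apply: kspanM _ Gh; apply/kspan_delta/groupM; [apply: (subsetP sLG)|apply: (subsetP sMG)].
have := aug_gen_commute x^-1 y^-1 h'; rewrite !invgK.
have -> : gmul (gdelta (y^-1 * x^-1)) h' = h by rewrite gmul_deltaA -invMg mulVg gmul1l.
move=> e; exists (gmul (aug_gen x^-1) (gmul (aug_gen y^-1) h')),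
  (gmul (aug_gen y^-1) (gmul (aug_gen x^-1) (- h'))).
split; last split.
- apply: prodsp_mem; first by apply: aug_gen_aug; rewrite groupV.
  by apply: prodsp_mem => //; apply: aug_gen_aug; rewrite groupV.
- apply: prodsp_mem; first by apply: aug_gen_aug; rewrite groupV.
  by apply: prodsp_mem; [apply: aug_gen_aug; rewrite groupV|apply: kspanN].
- by rewrite !gmulNr e addrAC subrr add0r.
Qed.

Lemma aug_gen_commutator_mem c h : c \in [~: L, M] -> kG h -> augLM_sum (gmul (aug_gen c) h).
Proof.
have [S0 SD] : sp_closed augLM_sum by apply: addsp_closed; apply: prodsp_closed.
move=> /gen_prodgP [n [cs Hc ->]]; elim: n cs Hc h => [|n IH] cs Hc h Gh.
  by rewrite big_ord0 /aug_gen subrr gmul0l.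
rewrite big_ord_recl aug_genM; apply: SD; last by apply: IH => // i; apply: Hc.
have /imset2P [a b aL bM ->] := Hc ord0; apply: aug_gen_commg_mem => //.
apply: kspanM _ Gh; apply/kspan_delta/group_prod => i _.
have /imset2P [a' b' a'L b'M ->] := Hc (lift ord0 i).
by rewrite groupR ?(subsetP sLG _ a'L) ?(subsetP sMG _ b'M).
Qed.

Lemma augkG_commg_le : lesp (IkG [~: L, M]) augLM_sum.
Proof.
apply: augkG_le; first by apply: addsp_closed; apply: prodsp_closed.
by move=> c h cC Gh; apply: aug_gen_commutator_mem.
Qed.

End TwoSubgroups.

Section NormalSubgroup.
Variable N : {group gT}.
Hypothesis nNG : N <| G.

Lemma kG_aug_normal : lesp (prodsp kG (aug k N)) (IkG N).
Proof.
have IC := prodsp_closed (aug k N) kG.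
apply: prodsp_le => // f u Gf Nu; apply: kspan_gmul_ind Gf _ => // g c gG.
have Ncu := augMl (kspan_scalar (X := N) c) Nu.
apply: (aug_ind (W := fun v => IkG N (gmul (gdelta g) v)) _ Ncu).
  exact: preim_gmull_closed.
move=> n c' nN; rewrite gdelta_aug_genJ; apply: prodsp_mem.
  by apply: aug_gen_aug; rewrite memJ_norm ?groupV // (subsetP (normal_norm nNG)).
by apply: kspanM; [apply: kspan_delta|apply: kspan_scalar].
Qed.

Lemma aug_kG_normal : lesp (IkG N) (prodsp kG (aug k N)).
Proof.
have IC := prodsp_closed kG (aug k N).
apply: prodsp_le => // u f Nu Gf; apply: aug_gmul_ind Nu _ => // n c nN.
have Gcf := kspanM (kspan_scalar (X := G) c) Gf.
apply: (kspan_ind (W := fun v => prodsp kG (aug k N) (gmul (aug_gen n) v)) _ Gcf).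
  exact: preim_gmull_closed.
move=> g c' gG; rewrite -[n in aug_gen n](conjgK g) -gdelta_aug_genJ.
apply: prodsp_mem; first exact: kspan_delta.
apply: augMr; first exact: kspan_scalar.
by apply: aug_gen_aug; rewrite memJ_norm // (subsetP (normal_norm nNG)).
Qed.

End NormalSubgroup.

Lemma aug_commutator_eq (L N : {group gT}) : L \subset G -> N \subset G ->
  eqsp (addsp (prodsp (prodsp (aug k L) (aug k N)) kG) (prodsp (prodsp (aug k N) (aug k L)) kG))
       (addsp (IkG [~: L, N]) (prodsp (prodsp (aug k N) (aug k L)) kG)).
Proof.
move=> sLG sNG; have [C0 _] := prodsp_closed (aug k [~: L, N]) kG.
have [P0 _] := prodsp_closed (prodsp (aug k L) (aug k N)) kG.
have [Q0 _] := prodsp_closed (prodsp (aug k N) (aug k L)) kG.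
have RC : sp_closed (addsp (IkG [~: L, N]) (prodsp (prodsp (aug k N) (aug k L)) kG)).
  by apply: addsp_closed; apply: prodsp_closed.
apply: eqsp_le; apply: addsp_le.
- exact: RC.
- apply: lesp_trans (lesp_trans prodspAl (aug_augkG_swap sLG sNG)) _.
  apply: addsp_le; [exact: RC| |exact: addspSl].
  by apply: lesp_trans prodspAr _; apply: addspSr.
- exact: addspSr.
- by apply: addsp_closed; apply: prodsp_closed.
- apply: lesp_trans (augkG_commg_le sLG sNG) _.
  by apply: addspS; apply: prodspAr.
- exact: addspSr.
Qed.

End AugmentationIdeals.

Section RelativeLowerCentralSeries.
Variables (gT : finGroupType) (k : nzRingType) (G N : {group gT}).
Local Open Scope group_scope.
Hypothesis nNG : N <| G.
Local Notation kG := (kspan k G).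
Local Notation I := (aug k N).
Local Notation IkG X := (prodsp (aug k X) kG).

Lemma gamma_group_set i : group_set (gamma G N i).
Proof. by rewrite /gamma; case: i.-1 => [|j] /=; apply: groupP. Qed.

Canonical gamma_group i := Group (gamma_group_set i).

Lemma gamma_sub i : gamma G N i \subset G.
Proof.
rewrite /gamma; elim: i.-1 => [|j IH] //=.
exact: subset_trans (commgSS IH (normal_sub nNG)) (der1_subG G).
Qed.

Lemma gammaS i : (0 < i)%N -> gamma G N i.+1 = [~: gamma G N i, N].
Proof. by case: i. Qed.

Definition gamma_ideal i := IkG (gamma G N i).
Definition Jterm n i := prodsp (powsp I (n.+1 - i)) (gamma_ideal i).
Definition Jsum n := bigsp (index_iota 1 n.+1) (Jterm n).

Lemma JtermE n i : (0 < i)%N -> Jterm n i = prodsp (powsp1 I (n - i)) (gamma_ideal i).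
Proof. by case: i => // i _; rewrite /Jterm /powsp subSS subnS. Qed.

Lemma Jsum_closed n : sp_closed (Jsum n).
Proof. by apply: bigsp_closed => i; apply: prodsp_closed. Qed.

Lemma Jterm_sup n i : (0 < i <= n)%N -> lesp (Jterm n i) (Jsum n).
Proof.
move=> i_n; apply: bigsp_sup => [j|]; first exact: prodsp_closed.
by rewrite mem_index_iota ltnS.
Qed.

Lemma powsp1S_le m : lesp (prodsp (powsp1 I m) I) (powsp1 I m.+1).
Proof.
elim: m => [|m IH] //=; apply: lesp_trans prodspAl _.
exact: prodspS.
Qed.

Lemma gamma_ideal_aug_le i : (0 < i)%N ->
  lesp (prodsp (gamma_ideal i) I) (addsp (prodsp I (gamma_ideal i)) (gamma_ideal i.+1)).
Proof.
move=> i_gt0; rewrite /gamma_ideal gammaS //.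
apply: lesp_trans prodspAl _.
apply: lesp_trans (aug_augkG_swap (gamma_sub i) (normal_sub nNG)).
exact/prodspS/kG_aug_normal.
Qed.

Lemma gamma_idealS_le i : (0 < i)%N ->
  lesp (gamma_ideal i.+1)
       (addsp (prodsp (aug k (gamma G N i)) (IkG N)) (prodsp I (gamma_ideal i))).
Proof.
move=> i_gt0; rewrite /gamma_ideal gammaS //.
exact: augkG_commg_le (gamma_sub i) (normal_sub nNG).
Qed.

Lemma Jsum_mull n : lesp (prodsp I (Jsum n)) (Jsum n.+1).
Proof.
apply: lesp_trans prodsp_sumr _.
apply: bigsp_le => [|i]; first exact: Jsum_closed.
rewrite mem_index_iota ltnS => /andP [i_gt0 i_le_n].
apply: lesp_trans (Jterm_sup (n := n.+1) (i := i) _); last by rewrite i_gt0 ltnW.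
by rewrite !JtermE // subSn //; apply: prodspAr.
Qed.

Lemma Jsum_mulr n : lesp (prodsp (Jsum n) I) (Jsum n.+1).
Proof.
apply: lesp_trans prodsp_suml _.
apply: bigsp_le => [|i]; first exact: Jsum_closed.
rewrite mem_index_iota ltnS => /andP [i_gt0 i_le_n].
rewrite JtermE //; apply: lesp_trans prodspAl _.
apply: lesp_trans (prodspS lesp_refl (gamma_ideal_aug_le i_gt0)) _.
apply: lesp_trans prodspDr _.
apply: addsp_le; first exact: Jsum_closed.
  apply: lesp_trans prodspAr _.
  apply: lesp_trans (prodspS (@powsp1S_le (n - i)) lesp_refl) _.
  rewrite -subSn // -JtermE //.
  by apply: Jterm_sup; rewrite i_gt0 ltnW.
have -> : prodsp (powsp1 I (n - i)) (gamma_ideal i.+1) = Jterm n.+1 i.+1 by rewrite JtermE.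
exact: Jterm_sup.
Qed.

Lemma Jterm_last_le n : (0 < n)%N ->
  lesp (Jterm n.+1 n.+1) (addsp (prodsp I (Jsum n)) (prodsp (Jsum n) I)).
Proof.
move=> n_gt0; have Jn : lesp (prodsp I (gamma_ideal n)) (Jsum n).
  by have := Jterm_sup (n := n) (i := n); rewrite JtermE // subnn; apply; rewrite n_gt0 /=.
have [L0 _] := prodsp_closed I (Jsum n); have [R0 _] := prodsp_closed (Jsum n) I.
rewrite JtermE // subnn /=.
apply: lesp_trans (prodspS lesp_refl (gamma_idealS_le n_gt0)) _.
apply: lesp_trans prodspDr _.
apply: addsp_le; first by apply: addsp_closed; apply: prodsp_closed.
  apply: lesp_trans (addspSr L0).
  apply: lesp_trans (prodspS lesp_refl (prodspS lesp_refl (aug_kG_normal nNG))) _.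
  apply: lesp_trans (prodspS lesp_refl prodspAr) _.
  by apply: lesp_trans prodspAr _; apply: prodspS.
by apply: lesp_trans (addspSl R0); apply: prodspS.
Qed.

Lemma Jsum_S_le n : (0 < n)%N ->
  lesp (Jsum n.+1) (addsp (prodsp I (Jsum n)) (prodsp (Jsum n) I)).
Proof.
move=> n_gt0; have [L0 _] := prodsp_closed I (Jsum n); have [R0 _] := prodsp_closed (Jsum n) I.
apply: bigsp_le => [|i]; first by apply: addsp_closed; apply: prodsp_closed.
rewrite mem_index_iota ltnS => /andP [i_gt0]; rewrite leq_eqVlt => /orP [/eqP -> | i_le_n].
  exact: Jterm_last_le.
apply: lesp_trans (addspSl R0); rewrite JtermE // subSn //=.
apply: lesp_trans prodspAl _; apply: prodspS => //.
by rewrite -JtermE //; apply: Jterm_sup; rewrite i_gt0.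
Qed.

Lemma Jrel_Jsum m : eqsp (@Jrel gT k N G m) (Jsum m.+1).
Proof.
elim: m => [|m IH].
  rewrite /Jsum /bigsp /index_iota /= big_cons big_nil /Jterm /powsp /gamma_ideal /gamma /=.
  apply: eqsp_le; last apply: addsp_le.
  - apply: lesp_trans (addspSl (B := zerosp) (erefl 0)).
    by apply: prodspS => // u /augkG_id.
  - exact: prodsp_closed.
  - by apply: prodspS => // u /augkG_id.
  - by move=> f ->; apply: (prodsp_closed _ _).1.
have JJ : lesp (@Jrel gT k N G m) (Jsum m.+1) by move=> f /IH.
have JJ' : lesp (Jsum m.+1) (@Jrel gT k N G m) by move=> f /IH.
apply: eqsp_le.
  apply: addsp_le; first exact: Jsum_closed.
    exact: lesp_trans (prodspS lesp_refl JJ) (@Jsum_mull _).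
  exact: lesp_trans (prodspS JJ lesp_refl) (@Jsum_mulr _).
by apply: lesp_trans (Jsum_S_le (ltn0Sn m)) _; apply: addspS; apply: prodspS.
Qed.

End RelativeLowerCentralSeries.

Theorem mainTheorem8 (p : nat) (gT : finGroupType) (G L N : {group gT}) :
  prime p -> (p.-group G)%g -> (L <| G)%g -> (N <| G)%g ->
  (eqsp
     (addsp (prodsp (prodsp (aug 'F_p L) (aug 'F_p N)) (kspan 'F_p G))
            (prodsp (prodsp (aug 'F_p N) (aug 'F_p L)) (kspan 'F_p G)))
     (addsp (prodsp (aug 'F_p [~: L, N]%g) (kspan 'F_p G))
            (prodsp (prodsp (aug 'F_p N) (aug 'F_p L)) (kspan 'F_p G))))
  /\
  (forall n : nat, (1 <= n)%N ->
     eqsp (J 'F_p N G n)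
          (\big[@addsp gT 'F_p / @zerosp gT 'F_p]_(1 <= i < n.+1)
              prodsp (powsp (aug 'F_p N) (n.+1 - i))
                     (prodsp (aug 'F_p (gamma G N i)) (kspan 'F_p G)))).
Proof.
move=> _ _ nLG nNG; split; first exact: aug_commutator_eq (normal_sub nLG) (normal_sub nNG).
by case=> // m _; apply: Jrel_Jsum.
Qed.
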